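(* Let $p$ be an odd prime. If $p\ne5$, $$(-1)^{\frac{p-1}2}\sum_{k=0}^{[p/4]}\binom{4k}{2k}\frac1{20^k}\equiv\begin{cases}\pm1\pmod p&\text{if }p\equiv\pm1\pmod5,\\ \pm2\pmod p&\text{if }p\equiv\pm3\pmod5;\end{cases}$$ if $p\ne13$, $$(-1)^{\frac{p-1}2}\sum_{k=0}^{[p/4]}\binom{4k}{2k}\frac1{52^k}\equiv\begin{cases}\pm1\pmod p&\text{if }p\equiv\pm1,\pm3,\pm9\pmod{13},\\ \pm\frac23\pmod p&\text{if }p\equiv\pm2,\pm5,\pm6\pmod{13};\end{cases}$$ and if $p\ne17$, $$\sum_{k=0}^{[p/4]}\binom{4k}{2k}\frac1{17^k}\equiv\begin{cases}1\pmod p&\text{if }p\equiv\pm1,\pm4\pmod{17},\\-1\pmod p&\text{if }p\equiv\pm2,\pm8\pmod{17},\\4\pmod p&\text{if }p\equiv\pm3,\pm5\pmod{17},\\-4\pmod p&\text{if }p\equiv\pm6,\pm7\pmod{17}.\end{cases}$$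
   Context: $[x]$ is the greatest integer $\le x$. *)

From HB Require Import structures.
From mathcomp Require Import all_boot all_order all_algebra.
Set Implicit Arguments. Unset Strict Implicit. Unset Printing Implicit Defensive.
Import GRing.Theory Num.Theory.
Local Open Scope ring_scope.

Definition binsum (p m : nat) : 'F_p :=
  \sum_(k < (p %/ 4).+1) ('C(4 * k, 2 * k))%:R / (m%:R) ^+ k.

Definition legsign (p : nat) : 'F_p := (-1) ^+ (p.-1)./2.

(* Let h = (p-1)/2 and u^2 = 16/m.  Since C(2n,n) = (-4)^n C(h,n) mod p, the
   sum equals ((1+u)^h + (1-u)^h)/2.  In characteristic p, with z a primitive
   N-th root of unity (N = 20, 52, 17), u is a rational multiple of a quadratic
   Gauss sum in z, and d^2 (1+u) = w^2, d^2 (1-u) = w'^2 for explicit w, w' in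
   Z[z].  Then (1+u)^h = w^p/w, and w^p is w with z replaced by z^p, so the sum
   is determined by p mod N; for each residue this is a polynomial identity
   modulo the N-th cyclotomic polynomial, checked by computation.  A factor i
   with i^2 = -1 (i^p = (-1)^h i) produces the sign (-1)^((p-1)/2). *)

From HB Require Import structures.
From mathcomp Require Import all_boot all_order all_algebra all_field all_solvable.
From mathcomp Require Import ring zify.
Import GRing.Theory Num.Theory.
Local Open Scope ring_scope.

Lemma bin_center_rec n : ('C(n.+1.*2, n.+1) * n.+1 = 'C(n.*2, n) * (n.*2.+1 * 2))%N.
Proof.
have sym : 'C(n.*2.+1, n.+1) = 'C(n.*2.+1, n).
  by rewrite -bin_sub -addnn; [congr 'C(_, _) |]; lia.
have := mul_bin_diag n.+1.*2 n; have := mul_bin_diag n.*2.+1 n.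
rewrite doubleS /= sym -!muln2.
set a := 'C(_, _); set b := 'C(_, _); set c := 'C(_, _); nia.
Qed.

Lemma sum_ord_pairs (V : nmodType) K (F : nat -> V) :
  \sum_(i < K.*2) F i = \sum_(k < K) (F k.*2 + F k.*2.+1).
Proof.
by elim: K => [|K IHK]; rewrite ?big_ord0 // doubleS !big_ord_recr /= IHK addrA.
Qed.

Lemma exprD1n_even (R : comNzRingType) (x : R) n :
  (1 + x) ^+ n + (1 - x) ^+ n = 2 * \sum_(k < n./2.+1) x ^+ k.*2 *+ 'C(n, k.*2).
Proof.
pose G i := (x ^+ i + (- x) ^+ i) *+ 'C(n, i).
have n_lt : (n.+1 <= n./2.+1.*2)%N.
  by rewrite doubleS !ltnS -[leqLHS](odd_double_half n) addnC -addn1 leq_add2l leq_b1.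
transitivity (\sum_(i < n./2.+1.*2) G i).
  rewrite !(addrC 1) !exprD1n -big_split (eq_bigr (G \o val)) => [|i _]; last first.
    by rewrite /= /G mulrnDl.
  rewrite (big_ord_widen _ G n_lt) big_mkcond; apply: eq_bigr => i _.
  by case: ltnP => // n_lt_i; rewrite /G bin_small // mulr0n.
rewrite sum_ord_pairs mulr_sumr; apply: eq_bigr => k _.
have even_sign : (-1) ^+ k.*2 = 1 :> R by rewrite -mul2n exprM sqrrN !expr1n.
rewrite /G !(exprNn x) [(-1) ^+ _.+1]exprS even_sign mulr1 mulN1r mul1r subrr mul0rn.
by rewrite addr0 -mulr2n -mulrnA mulnC mulrnA mulr_natl.
Qed.

Lemma prim_root_half (R : idomainType) (M : nat) (z : R) :
  (0 < M)%N -> (M.*2).-primitive_root z -> z ^+ M = -1.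
Proof.
move=> M_gt0 z_prim; have : (z ^+ M) ^+ 2 == 1 by rewrite -exprM muln2 prim_expr_order.
rewrite sqrf_eq1 -(prim_order_dvd z_prim) => /orP[|/eqP //].
by rewrite -muln2 gtnNdvd // -{1}[M]muln1 ltn_pmul2l.
Qed.

Lemma prim_root_sqr_neqN1 (R : idomainType) (N : nat) (z : R) :
  N.-primitive_root z -> ~~ (N %| 4)%N -> 1 + z ^+ 2 != 0.
Proof.
move=> z_prim N_ndvd4; have z4 : z ^+ 4 != 1 by rewrite -(prim_order_dvd z_prim).
apply: contraNneq z4 => z2.
by rewrite -[4%N]/(2 * 2)%N exprM -[z ^+ 2](addKr 1) z2 addr0 sqrrN expr1n.
Qed.

(* Integer polynomials as little-endian coefficient lists, for computation. *)
Definition zpoly := seq int.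

Fixpoint zeval {R : comNzRingType} (a : zpoly) (x : R) : R :=
  if a is c :: a' then c%:~R + x * zeval a' x else 0.

Fixpoint zadd (a b : zpoly) : zpoly :=
  match a, b with
  | [::], _ => b
  | _, [::] => a
  | c :: a', d :: b' => (c + d) :: zadd a' b'
  end.

Definition zscale (c : int) (a : zpoly) : zpoly := map ( *%R c) a.

Definition zsub (a b : zpoly) : zpoly := zadd a (zscale (-1) b).

Fixpoint zmul (a b : zpoly) : zpoly :=
  if a is c :: a' then zadd (zscale c b) (0 :: zmul a' b) else [::].

Definition zmonomial (k : nat) (c : int) : zpoly := ncons k 0 [:: c].

Fixpoint zsubst_rec (N r k : nat) (a : zpoly) : zpoly :=
  if a is c :: a' then zadd (zmonomial (k * r %% N) c) (zsubst_rec N r k.+1 a')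
  else [::].

Definition zsubst (N r : nat) (a : zpoly) : zpoly := zsubst_rec N r 0 a.

(* Synthetic division by a monic polynomial, on big-endian lists. *)
Fixpoint zsynth (ds : zpoly) (k : nat) (a : zpoly) : zpoly :=
  match k, a with
  | k'.+1, c :: a' => c :: zsynth ds k' (zsub a' (zscale c ds))
  | _, _ => [::]
  end.

Definition zquo (phi a : zpoly) : zpoly :=
  let ds := behead (rev phi) in rev (zsynth ds (size a - size ds) (rev a)).

(* zquo is never proved correct: zdvd re-checks a = zquo phi a * phi. *)
Definition zdvd (phi a : zpoly) : bool :=
  all (eq_op^~ 0) (zsub a (zmul (zquo phi a) phi)).

Section Evaluation.
Context {R : comNzRingType}.
Implicit Types (x : R) (a b : zpoly).

Lemma zeval_add a b x : zeval (zadd a b) x = zeval a x + zeval b x.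
Proof.
elim: a b => [|c a IHa] [|d b] /=; rewrite ?add0r ?addr0 //.
by rewrite IHa intrD mulrDr addrACA.
Qed.

Lemma zeval_scale c a x : zeval (zscale c a) x = c%:~R * zeval a x.
Proof.
elim: a => [|d a IHa] /=; first by rewrite mulr0.
by rewrite IHa intrM mulrDr mulrCA.
Qed.

Lemma zeval_sub a b x : zeval (zsub a b) x = zeval a x - zeval b x.
Proof. by rewrite zeval_add zeval_scale mulN1r. Qed.

Lemma zeval_mul a b x : zeval (zmul a b) x = zeval a x * zeval b x.
Proof.
elim: a => [|c a IHa] /=; first by rewrite mul0r.
by rewrite zeval_add zeval_scale /= IHa add0r mulrDl mulrA.
Qed.

Lemma zeval_monomial k c x : zeval (zmonomial k c) x = c%:~R * x ^+ k.
Proof.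
elim: k => [|k IHk] /=; first by rewrite mulr0 addr0 mulr1.
by rewrite add0r IHk exprS mulrCA.
Qed.

Lemma zeval_subst N r a x : x ^+ N = 1 -> zeval (zsubst N r a) x = zeval a (x ^+ r).
Proof.
move=> xN; suff shift k : zeval (zsubst_rec N r k a) x = (x ^+ r) ^+ k * zeval a (x ^+ r).
  by rewrite /zsubst shift expr0 mul1r.
elim: a k => [|c a IHa] k /=; first by rewrite mulr0.
rewrite zeval_add zeval_monomial IHa expr_mod // mulnC exprM exprSr; ring.
Qed.

Lemma zeval_eq0 a x : all (eq_op^~ 0) a -> zeval a x = 0.
Proof. by elim: a => [|c a IHa] //= /andP[/eqP-> /IHa->]; rewrite mulr0 addr0. Qed.

Lemma zdvd_root phi a x : zdvd phi a -> zeval phi x = 0 -> zeval a x = 0.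
Proof.
rewrite /zdvd => /(zeval_eq0 _ x); rewrite zeval_sub zeval_mul => /eqP + phi_x.
by rewrite phi_x mulr0 subr0 => /eqP.
Qed.

End Evaluation.

Lemma zeval_root_of_factor (R : idomainType) (phi K a : zpoly) (x : R) :
  all (eq_op^~ 0) (zsub (zmul phi K) a) -> zeval a x = 0 -> zeval K x != 0 ->
  zeval phi x = 0.
Proof.
move=> /(zeval_eq0 _ x); rewrite zeval_sub zeval_mul => /eqP + a_x K_x.
by rewrite a_x subr0 mulf_eq0 (negbTE K_x) orbF => /eqP.
Qed.

(* With z a root of phi, u := U(z)/e and i := I(z), w := W(z), w' := W'(z), the
   conditions say u^2 m = 16, w^2 = d^2 (1 + u), w'^2 = d^2 (1 - u), and, for
   every unit r mod N with value r = (a, b),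
   2 a i w w' = b ((i w)(z^r) w' + (i w')(z^r) w). *)
Definition frobenius_certificate (N : nat) (phi : zpoly) (m e d : nat)
    (U W W' I : zpoly) (value : nat -> int * int) : bool :=
  let IW := zmul I W in let IW' := zmul I W' in
  [&& zdvd phi (zsub (zscale m%:Z (zmul U U)) [:: 16 * e%:Z ^+ 2]),
      zdvd phi (zsub (zscale e%:Z (zmul W W)) (zscale (d%:Z ^+ 2) (zadd [:: e%:Z] U))),
      zdvd phi (zsub (zscale e%:Z (zmul W' W')) (zscale (d%:Z ^+ 2) (zsub [:: e%:Z] U)))
    & all (fun r => ~~ coprime r N ||
        zdvd phi (zsub (zscale (2 * (value r).1) (zmul IW W'))
          (zscale (value r).2
             (zadd (zmul (zsubst N r IW) W') (zmul (zsubst N r IW') W)))))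
      (iota 0 N)].

(* phiN is the N-th cyclotomic polynomial and uN is 2 (resp. 4) times the
   quadratic Gauss sum of the prime q | N at z^(N/q), so that uN(z)/q = 4/sqrt m;
   wN, wN' are square roots of d^2 (1 +- uN(z)/q). *)
Definition phi20 : zpoly :=
  [:: 1; 0; -1; 0; 1; 0; -1; 0; 1]%Z.
Definition u20 : zpoly :=
  [:: 0; 0; 0; 0; 2; 0; 0; 0; -2; 0; 0; 0; -2; 0; 0; 0; 2]%Z.
Definition w20 : zpoly :=
  [:: 0; 3; 0; 1; 0; 0; 0; 0; 0; 0; 0; 0; 0; 0; 0; 0; 0; 1; 0; 3]%Z.
Definition w20' : zpoly :=
  [:: 0; 0; 0; 3; 0; 0; 0; 0; 0; 1; 0; 1; 0; 0; 0; 0; 0; 3]%Z.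

Definition value20 (r : nat) : int * int :=
  let s := (r %% 5)%N in
  if s == 1%N then (1, 1) else if s == 4%N then (-1, 1)
  else if s == 3%N then (2, 1) else (-2, 1).

Lemma certificate20 :
  frobenius_certificate 20 phi20 20 5 5 u20 w20 w20' (zmonomial 5 1) value20.
Proof. by vm_compute. Qed.

Definition phi52 : zpoly :=
  [:: 1; 0; -1; 0; 1; 0; -1; 0; 1; 0; -1; 0; 1; 0; -1; 0; 1; 0; -1; 0; 1; 0;
    -1; 0; 1]%Z.
Definition u52 : zpoly :=
  [:: 0; 0; 0; 0; 2; 0; 0; 0; -2; 0; 0; 0; 2; 0; 0; 0; 2; 0; 0; 0; -2; 0; 0; 0;
    -2; 0; 0; 0; -2; 0; 0; 0; -2; 0; 0; 0; 2; 0; 0; 0; 2; 0; 0; 0; -2; 0; 0; 0;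
    2]%Z.
Definition w52 : zpoly :=
  [:: 0; -1; 0; 0; 0; 5; 0; 5; 0; -1; 0; 5; 0; 0; 0; 0; 0; 0; 0; 0; 0; 0; 0;
    -1; 0; 0; 0; 0; 0; -1; 0; 0; 0; 0; 0; 0; 0; 0; 0; 0; 0; 5; 0; -1; 0; 5; 0;
    5; 0; 0; 0; -1]%Z.
Definition w52' : zpoly :=
  [:: 0; 0; 0; 5; 0; -1; 0; -1; 0; 0; 0; -1; 0; 0; 0; 0; 0; 5; 0; 0; 0; 0; 0;
    0; 0; 5; 0; 5; 0; 0; 0; 0; 0; 0; 0; 5; 0; 0; 0; 0; 0; -1; 0; 0; 0; -1; 0;
    -1; 0; 5]%Z.

Definition value52 (r : nat) : int * int :=
  let s := (r %% 13)%N in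
  if s \in [:: 1; 3; 9]%N then (1, 1) else if s \in [:: 12; 10; 4]%N then (-1, 1)
  else if s \in [:: 2; 5; 6]%N then (2, 3) else (-2, 3).

Lemma certificate52 :
  frobenius_certificate 52 phi52 52 13 13 u52 w52 w52' (zmonomial 13 1) value52.
Proof. by vm_compute. Qed.

Definition phi17 : zpoly :=
  [:: 1; 1; 1; 1; 1; 1; 1; 1; 1; 1; 1; 1; 1; 1; 1; 1; 1]%Z.
Definition u17 : zpoly :=
  [:: 0; 4; 4; -4; 4; -4; -4; -4; 4; 4; -4; -4; -4; 4; -4; 4; 4]%Z.
Definition w17 : zpoly :=
  [:: 5; 8; 2; 10; 8; 10; 0; 0; 2; 2; 0; 0; 10; 8; 10; 2; 8]%Z.
Definition w17' : zpoly :=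
  [:: 5; 0; 10; 8; 0; 8; 2; 2; 10; 10; 2; 2; 8; 0; 8; 10]%Z.

Definition value17 (r : nat) : int * int :=
  if r \in [:: 1; 16; 4; 13]%N then (1, 1) else if r \in [:: 2; 15; 8; 9]%N then (-1, 1)
  else if r \in [:: 3; 14; 5; 12]%N then (4, 1) else (-4, 1).

Lemma certificate17 :
  frobenius_certificate 17 phi17 17 17 17 u17 w17 w17' [:: 1]%Z value17.
Proof. by vm_compute. Qed.

Definition binsumF (L : fieldType) (p m : nat) : L :=
  \sum_(k < (p %/ 4).+1) 'C(4 * k, 2 * k)%:R / m%:R ^+ k.

Section OddCharacteristic.
Variables (L : fieldType) (p : nat).
Hypotheses (pcharL : p \in [pchar L]) (p_odd : odd p).
Local Notation h := (p.-1)./2.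

Lemma double_half_pred : (h.*2.+1 = p)%N.
Proof.
have p_gt0 := prime_gt0 (pcharf_prime pcharL).
have p_mod2 : (p %% 2 = 1)%N by rewrite modn2 p_odd.
rewrite -divn2 -muln2; lia.
Qed.

Lemma divn4_half : (p %/ 4 = h./2)%N.
Proof.
rewrite -[in LHS]double_half_pred (divnMA _ 2 2) !divn2.
by rewrite -[(h.*2.+1)./2]/(uphalf h.*2) uphalf_double.
Qed.

Lemma natr_double_half : h.*2%:R = -1 :> L.
Proof. by apply/eqP; rewrite -addr_eq0 -(natrD _ _ 1) addn1 double_half_pred pcharf0. Qed.

Lemma natr_lt_pchar_neq0 n : (0 < n < p)%N -> n%:R != 0 :> L.
Proof.
case/andP=> n_gt0 n_lt_p; rewrite -(dvdn_pcharf pcharL).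
by apply: contraTN n_lt_p => /(dvdn_leq n_gt0); rewrite leqNgt.
Qed.

Lemma pchar_two_neq0 : 2 != 0 :> L.
Proof.
rewrite -(dvdn_pcharf pcharL); apply: contraTN p_odd => /(dvdn_leq (ltn0Sn 1)).
by rewrite leq_eqVlt ltnS leqNgt prime_gt1 ?(pcharf_prime pcharL) // orbF => /eqP->.
Qed.

Lemma pchar_bin_center n : (n <= h)%N -> 'C(n.*2, n)%:R = (-4) ^+ n * 'C(h, n)%:R :> L.
Proof.
elim: n => [|n IHn] n_lt_h; first by rewrite !bin0 mul1r.
have n1_neq0 : n.+1%:R != 0 :> L.
  by apply: natr_lt_pchar_neq0; rewrite /= -double_half_pred ltnS -addnn ltn_addr.
apply: (mulIf n1_neq0); rewrite -natrM bin_center_rec natrM IHn; last exact: ltnW.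
have pascal : 'C(h, n.+1)%:R * n.+1%:R = (h%:R - n%:R) * 'C(h, n)%:R :> L.
  by rewrite -natrM mulnC mul_bin_left natrM natrB // ltnW.
rewrite -[RHS]mulrA pascal.
have two_h : h%:R * 2 = -1 :> L by rewrite -natr_double_half -muln2 natrM.
rewrite -[n.*2.+1]addn1 -muln2 natrM natrD natrM; apply/eqP; rewrite -subr_eq0; apply/eqP.
rewrite exprS; set c := 'C(h, n)%:R.
transitivity ((-4) ^+ n * c * 2 * (h%:R * 2 + 1)); first ring.
by rewrite two_h addNr mulr0.
Qed.

Lemma binsumF_even_powers (m : nat) (u : L) :
  u ^+ 2 * m%:R = 16 -> 2 * binsumF L p m = (1 + u) ^+ h + (1 - u) ^+ h.
Proof.
move=> u2m; have m_neq0 : m%:R != 0 :> L.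
  apply: contra_eq_neq u2m => ->; rewrite mulr0 eq_sym.
  by rewrite -[16%N]/(2 ^ 4)%N natrX expf_neq0 ?pchar_two_neq0.
rewrite exprD1n_even /binsumF divn4_half; congr (2 * _); apply: eq_bigr => k _.
have k2_le_h : (k.*2 <= h)%N by rewrite -geq_half_double -ltnS.
have -> : (4 * k = k.*2.*2)%N by rewrite -!muln2 -mulnA mulnC.
have u2 : u ^+ 2 = 16 / m%:R by rewrite -u2m mulfK.
have sq4 : 4 ^+ 2 = 16 :> L by rewrite -natrX.
rewrite mul2n pchar_bin_center // -mul2n !exprM sqrrN sq4 u2 expr_div_n.
by rewrite mulr_natr mulrnAl.
Qed.

Lemma expr_pchar_sqr (d : nat) (w c : L) :
  d%:R != 0 :> L -> w ^+ 2 = d%:R ^+ 2 * c -> w ^+ p = c ^+ h * w.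
Proof.
move=> d_neq0 w2; have fermat : d%:R ^+ h.*2 = 1 :> L.
  apply: (mulIf d_neq0); rewrite mul1r -exprSr double_half_pred.
  by rewrite -(pFrobenius_autE pcharL) pFrobenius_aut_nat.
rewrite -[in LHS]double_half_pred exprSr -mul2n exprM w2 exprMn -exprM mul2n.
by rewrite fermat mul1r.
Qed.

Lemma expr_pchar_sqrN1 (i : L) : i ^+ 2 = -1 -> i ^+ p = (-1) ^+ h * i.
Proof. by move=> i2; apply: (expr_pchar_sqr 1); rewrite ?oner_eq0 // i2 expr1n mul1r. Qed.

Lemma zeval_frobenius (a : zpoly) (x : L) : zeval a x ^+ p = zeval a (x ^+ p).
Proof.
rewrite -(pFrobenius_autE pcharL); elim: a => [|c a IHa] /=; first exact: rmorph0.
by rewrite rmorphD rmorphM /= pFrobenius_aut_int IHa !pFrobenius_autE.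
Qed.

Lemma binsumF_frobenius_pair (m d : nat) (u i w w' sg a b : L) :
  u ^+ 2 * m%:R = 16 -> m%:R != 16 :> L -> d%:R != 0 :> L ->
  w ^+ 2 = d%:R ^+ 2 * (1 + u) -> w' ^+ 2 = d%:R ^+ 2 * (1 - u) ->
  i ^+ p = sg * i -> i != 0 -> b != 0 ->
  2 * a * (i * w * w') = b * ((i * w) ^+ p * w' + (i * w') ^+ p * w) ->
  sg * binsumF L p m = a / b.
Proof.
move=> u2m m_neq16 d_neq0 w2 w'2 ip i_neq0 b_neq0 frob_ab.
have u2_neq1 : u ^+ 2 != 1 by apply: contraNneq m_neq16 => u2; rewrite -u2m u2 mul1r.
have w_neq0 : w != 0.
  apply: contraNneq u2_neq1 => w0; move/esym/eqP: w2; rewrite w0 expr0n /=.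
  rewrite mulf_eq0 expf_eq0 (negbTE d_neq0) addr_eq0 => /eqP u_1.
  by rewrite -[u]opprK -u_1 sqrrN expr1n.
have w'_neq0 : w' != 0.
  apply: contraNneq u2_neq1 => w'0; move/esym/eqP: w'2; rewrite w'0 expr0n /=.
  by rewrite mulf_eq0 expf_eq0 (negbTE d_neq0) subr_eq0 => /eqP<-; rewrite expr1n.
have iww'2_neq0 : 2 * (i * w * w') != 0 by rewrite !mulf_neq0 // pchar_two_neq0.
rewrite !exprMn ip (expr_pchar_sqr _ _ _ d_neq0 w2) in frob_ab.
rewrite (expr_pchar_sqr _ _ _ d_neq0 w'2) in frob_ab.
apply: (mulIf b_neq0); rewrite divfK //; apply: (mulIf iww'2_neq0).
transitivity (b * sg * (i * w * w') * (2 * binsumF L p m)); first ring.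
rewrite (binsumF_even_powers _ _ u2m); transitivity (2 * a * (i * w * w')).
  by rewrite frob_ab; ring.
ring.
Qed.

Lemma certified_binsumF {N phi m e d U W W' I value} (z sg : L) :
  frobenius_certificate N phi m e d U W W' I value ->
  N.-primitive_root z -> zeval phi z = 0 ->
  e%:R != 0 :> L -> d%:R != 0 :> L -> m%:R != 16 :> L ->
  zeval I z ^+ p = sg * zeval I z -> zeval I z != 0 ->
  ((value (p %% N)%N).2)%:~R != 0 :> L ->
  sg * binsumF L p m = ((value (p %% N)%N).1)%:~R / ((value (p %% N)%N).2)%:~R.
Proof.
move=> cert z_prim phi_z e_neq0 d_neq0 m_neq16 Ip I_neq0 b_neq0.
have root a : zdvd phi a -> zeval a z = 0 by move/zdvd_root; apply.
case/and4P: cert => /root hU /root hW /root hW' /allP hval.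
have N_gt0 := prim_order_gt0 z_prim; have zN := prim_expr_order z_prim.
have copN : coprime p N.
  rewrite prime_coprime ?(pcharf_prime pcharL) //.
  by apply/negP => /(prim_root_pcharF z_prim); rewrite pcharL.
set r := (p %% N)%N; have zr : z ^+ r = z ^+ p by rewrite expr_mod.
have := hval r; rewrite mem_iota ltn_mod N_gt0 coprime_modl copN => /(_ isT)/= /root.
rewrite zeval_sub !zeval_scale !zeval_add !zeval_mul !zeval_subst // zr.
rewrite -!zeval_frobenius !zeval_mul intrM rmorph_nat => /subr0_eq hr.
move: hU hW hW'; rewrite !(zeval_sub, zeval_scale, zeval_mul, zeval_add).
rewrite ![zeval [:: _] _]/= !mulr0 !addr0 !expr2 !intrM !rmorph_nat -!pmulrn.
move=> /subr0_eq hU /subr0_eq hW /subr0_eq hW'.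
apply: (binsumF_frobenius_pair m d (zeval U z / e%:R) (zeval I z)
  (zeval W z) (zeval W' z)) => //.
- apply: (mulIf (mulf_neq0 e_neq0 e_neq0)); rewrite -hU; field; exact: e_neq0.
- apply: (mulIf e_neq0); transitivity (e%:R * (zeval W z * zeval W z)); first ring.
  by rewrite hW; field.
- apply: (mulIf e_neq0); transitivity (e%:R * (zeval W' z * zeval W' z)); first ring.
  by rewrite hW'; field.
Qed.

Lemma binsumF20 (z : L) : 20.-primitive_root z ->
  (-1) ^+ h * binsumF L p 20 =
    ((value20 (p %% 20)%N).1)%:~R / ((value20 (p %% 20)%N).2)%:~R.
Proof.
move=> z_prim; have z10 : z ^+ 10 = -1 := @prim_root_half _ 10 _ isT z_prim.
have z_neq0 : z != 0 by rewrite (prim_root_eq0 z_prim).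
apply: (certified_binsumF z _ certificate20 z_prim).
- apply: (zeval_root_of_factor _ _ [:: 1; 0; 1]%Z (zadd [:: 1%Z] (zmonomial 10 1))).
  + by [].
  + by rewrite zeval_add zeval_monomial z10 /= mulr0 addr0 mulr1z mul1r subrr.
  + rewrite /= !mulr0 !addr0 mulr1z mulr0z add0r mulr1 -expr2.
    exact: (prim_root_sqr_neqN1 _ _ _ z_prim isT).
- by rewrite (prim_root_dvd_eq0 z_prim).
- by rewrite (prim_root_dvd_eq0 z_prim).
- by rewrite -subr_eq0 -natrB // (prim_root_dvd_eq0 z_prim).
- by rewrite zeval_monomial mulr1z mul1r expr_pchar_sqrN1 // -exprM.
- by rewrite zeval_monomial mulr1z mul1r expf_neq0.
- by rewrite /value20; do 3?case: ifP => _; rewrite /= oner_eq0.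
Qed.

Lemma binsumF52 (z : L) : p != 3%N -> 52.-primitive_root z ->
  (-1) ^+ h * binsumF L p 52 =
    ((value52 (p %% 52)%N).1)%:~R / ((value52 (p %% 52)%N).2)%:~R.
Proof.
move=> p_neq3 z_prim; have z26 : z ^+ 26 = -1 := @prim_root_half _ 26 _ isT z_prim.
have z_neq0 : z != 0 by rewrite (prim_root_eq0 z_prim).
have three_neq0 : 3%:R != 0 :> L.
  by rewrite -(dvdn_pcharf pcharL) dvdn_prime2 ?(pcharf_prime pcharL).
apply: (certified_binsumF z _ certificate52 z_prim).
- apply: (zeval_root_of_factor _ _ [:: 1; 0; 1]%Z (zadd [:: 1%Z] (zmonomial 26 1))).
  + by [].
  + by rewrite zeval_add zeval_monomial z26 /= mulr0 addr0 mulr1z mul1r subrr.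
  + rewrite /= !mulr0 !addr0 mulr1z mulr0z add0r mulr1 -expr2.
    exact: (prim_root_sqr_neqN1 _ _ _ z_prim isT).
- by rewrite (prim_root_dvd_eq0 z_prim).
- by rewrite (prim_root_dvd_eq0 z_prim).
- rewrite -subr_eq0 -natrB // -[(52 - 16)%N]/(4 * (3 * 3))%N !natrM.
  by rewrite !mulf_neq0 // (prim_root_dvd_eq0 z_prim).
- by rewrite zeval_monomial mulr1z mul1r expr_pchar_sqrN1 // -exprM.
- by rewrite zeval_monomial mulr1z mul1r expf_neq0.
- by rewrite /value52; do 3?case: ifP => _; rewrite /= ?oner_eq0.
Qed.

Lemma binsumF17 (z : L) : 17.-primitive_root z ->
  binsumF L p 17 = ((value17 (p %% 17)%N).1)%:~R / ((value17 (p %% 17)%N).2)%:~R.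
Proof.
move=> z_prim; rewrite -[binsumF _ _ _]mul1r.
apply: (certified_binsumF z _ certificate17 z_prim).
- apply: (zeval_root_of_factor _ _ [:: -1; 1]%Z (zadd [:: -1%Z] (zmonomial 17 1))).
  + by [].
  + rewrite zeval_add zeval_monomial prim_expr_order //=.
    by rewrite mulr0 addr0 mulr1z mulr1 addNr.
  + rewrite /= mulr0 addr0 mulr1z mulrN1z mulr1 addrC subr_eq0.
    by rewrite -[z]expr1 -(prim_order_dvd z_prim).
- by rewrite (prim_root_dvd_eq0 z_prim).
- by rewrite (prim_root_dvd_eq0 z_prim).
- by rewrite -subr_eq0 -natrB // oner_eq0.
- by rewrite /= mulr0 addr0 mulr1z expr1n mul1r.
- by rewrite /= mulr0 addr0 mulr1z oner_eq0.
- by rewrite /value17; do 3?case: ifP => _; rewrite /= oner_eq0.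
Qed.

End OddCharacteristic.

Lemma rmorph_binsumF {K L : fieldType} (f : {rmorphism K -> L}) p m :
  f (binsumF K p m) = binsumF L p m.
Proof.
rewrite rmorph_sum; apply: eq_bigr => k _.
by rewrite fmorph_div rmorphXn !rmorph_nat.
Qed.

Lemma rmorph_binsum {L : fieldType} p m (f : {rmorphism 'F_p -> L}) :
  f (binsum p m) = binsumF L p m.
Proof. exact: rmorph_binsumF. Qed.

Lemma rmorph_legsign {L : fieldType} p (f : {rmorphism 'F_p -> L}) :
  f (legsign p) = (-1) ^+ (p.-1)./2.
Proof. by rewrite rmorphXn rmorphN1. Qed.

Lemma exists_pchar_prim_root p N : prime p -> (0 < N)%N -> coprime p N ->
  exists (F : finFieldType) (pcharF : p \in [pchar F]) (z : F), N.-primitive_root z.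
Proof.
move=> p_pr N_gt0 copN; have phiN_gt0 : (0 < totient N)%N by rewrite totient_gt0.
have [F pcharF cardF] := pPrimePowerField p_pr phiN_gt0.
exists F, pcharF; set q := (p ^ totient N)%N in cardF.
have q_gt1 : (1 < q)%N by rewrite -[ltnLHS](expn0 p) ltn_exp2l ?prime_gt1.
have q_pred : q.-1.+1 = q := prednK (ltnW q_gt1).
have /hasP[g _ g_prim] : has (q.-1).-primitive_root (enum (predC1 (0 : F))).
  apply: has_prim_root; rewrite ?enum_uniq //.
  - by rewrite -subn1 subn_gt0.
  - apply/allP => x; rewrite mem_enum /= => x_neq0; apply/unity_rootP.
    by apply: (mulIf x_neq0); rewrite mul1r -exprSr q_pred -cardF expf_card.
  - by rewrite -cardE cardC1 cardF.
have N_dvd : (N %| q.-1)%N.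
  by rewrite -subn1 -(eqn_mod_dvd _ (ltnW q_gt1)) Euler_exp_totient.
set k := (q.-1 %/ N)%N; have qk : q.-1 = (k * N)%N by rewrite divnK.
have k_gt0 : (0 < k)%N by rewrite divn_gt0 // dvdn_leq // -subn1 subn_gt0.
exists (g ^+ k); have := exp_prim_root g_prim k.
by rewrite (gcdn_idPl _) qk ?mulKn // dvdn_mulr.
Qed.

Lemma Fp_eq_via_prim_root p N (x y : 'F_p) : prime p -> (0 < N)%N -> coprime p N ->
  (forall (L : fieldType) (f : {rmorphism 'F_p -> L}) (z : L),
     p \in [pchar L] -> N.-primitive_root z -> f x = f y) ->
  x = y.
Proof.
move=> p_pr N_gt0 copN fxy.
have [F [pcharF [z z_prim]]] := exists_pchar_prim_root _ _ p_pr N_gt0 copN.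
exact: (fmorph_inj (in_alg (pPrimeCharType pcharF))) (fxy _ _ z pcharF z_prim).
Qed.

Lemma prime_coprime_notin p n : prime p -> (0 < n)%N -> p \notin primes n -> coprime p n.
Proof. by move=> p_pr n_gt0; rewrite prime_coprime // mem_primes p_pr n_gt0. Qed.

Lemma binsum20_values p : prime p -> odd p -> p != 5%N ->
  [/\ (p %% 5 = 1)%N -> legsign p * binsum p 20 = 1,
      (p %% 5 = 4)%N -> legsign p * binsum p 20 = -1,
      (p %% 5 = 3)%N -> legsign p * binsum p 20 = 2
    & (p %% 5 = 2)%N -> legsign p * binsum p 20 = -2].
Proof.
move=> p_pr p_odd p_neq5.
have cop : coprime p 20.
  apply: prime_coprime_notin; rewrite // (_ : primes 20 = [:: 2; 5]%N) // !inE.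
  by rewrite negb_or p_neq5 andbT; apply: contraTneq p_odd => ->.
have value : legsign p * binsum p 20 =
    ((value20 (p %% 20)%N).1)%:~R / ((value20 (p %% 20)%N).2)%:~R.
  apply: (Fp_eq_via_prim_root p 20) => // L f z pcharL z_prim.
  rewrite rmorphM rmorph_legsign rmorph_binsum fmorph_div !rmorph_int.
  exact: (binsumF20 _ _ pcharL p_odd _ z_prim).
rewrite /value20 modn_dvdm // in value.
by split=> p_mod5; rewrite value p_mod5 /= ?rmorphN ?rmorph1 ?rmorph_nat divr1.
Qed.

Lemma binsum52_values p : prime p -> odd p -> p != 13%N -> p != 3%N ->
  [/\ (p %% 13 \in [:: 1; 3; 9])%N -> legsign p * binsum p 52 = 1,
      (p %% 13 \in [:: 12; 10; 4])%N -> legsign p * binsum p 52 = -1,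
      (p %% 13 \in [:: 2; 5; 6])%N -> legsign p * binsum p 52 = 2 / 3
    & (p %% 13 \in [:: 11; 8; 7])%N -> legsign p * binsum p 52 = - (2 / 3)].
Proof.
move=> p_pr p_odd p_neq13 p_neq3.
have cop : coprime p 52.
  apply: prime_coprime_notin; rewrite // (_ : primes 52 = [:: 2; 13]%N) // !inE.
  by rewrite negb_or p_neq13 andbT; apply: contraTneq p_odd => ->.
have value : legsign p * binsum p 52 =
    ((value52 (p %% 52)%N).1)%:~R / ((value52 (p %% 52)%N).2)%:~R.
  apply: (Fp_eq_via_prim_root p 52) => // L f z pcharL z_prim.
  rewrite rmorphM rmorph_legsign rmorph_binsum fmorph_div !rmorph_int.
  exact: (binsumF52 _ _ pcharL p_odd _ p_neq3 z_prim).
rewrite /value52 modn_dvdm // in value.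
split; rewrite !inE => /or3P[] /eqP p_mod13; rewrite value p_mod13 /=.
all: by rewrite ?rmorphN ?rmorph1 ?rmorph_nat ?divr1 ?mulNr.
Qed.

Lemma binsum17_values p : prime p -> odd p -> p != 17%N ->
  [/\ (p %% 17 \in [:: 1; 16; 4; 13])%N -> binsum p 17 = 1,
      (p %% 17 \in [:: 2; 15; 8; 9])%N -> binsum p 17 = -1,
      (p %% 17 \in [:: 3; 14; 5; 12])%N -> binsum p 17 = 4
    & (p %% 17 \in [:: 6; 11; 7; 10])%N -> binsum p 17 = -4].
Proof.
move=> p_pr p_odd p_neq17.
have cop : coprime p 17 by rewrite prime_coprime // dvdn_prime2.
have value : binsum p 17 =
    ((value17 (p %% 17)%N).1)%:~R / ((value17 (p %% 17)%N).2)%:~R.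
  apply: (Fp_eq_via_prim_root p 17) => // L f z pcharL z_prim.
  rewrite rmorph_binsum fmorph_div !rmorph_int.
  exact: (binsumF17 _ _ pcharL p_odd _ z_prim).
split; rewrite !inE => /or4P[] /eqP p_mod17; rewrite value p_mod17 /=.
all: by rewrite ?rmorphN ?rmorph1 ?rmorph_nat divr1.
Qed.

Theorem corollary2p9 (p : nat) (hp : prime p) (hodd : odd p) :
  (p != 5%N ->
     [/\ (p %% 5 = 1)%N -> legsign p * binsum p 20 = 1,
         (p %% 5 = 4)%N -> legsign p * binsum p 20 = -1,
         (p %% 5 = 3)%N -> legsign p * binsum p 20 = 2
       & (p %% 5 = 2)%N -> legsign p * binsum p 20 = -2]) /\
  (p != 13%N -> p != 3%N ->
     [/\ (p %% 13 \in [:: 1; 3; 9])%N -> legsign p * binsum p 52 = 1,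
         (p %% 13 \in [:: 12; 10; 4])%N -> legsign p * binsum p 52 = -1,
         (p %% 13 \in [:: 2; 5; 6])%N -> legsign p * binsum p 52 = 2 / 3
       & (p %% 13 \in [:: 11; 8; 7])%N -> legsign p * binsum p 52 = - (2 / 3)]) /\
  (p != 17%N ->
     [/\ (p %% 17 \in [:: 1; 16; 4; 13])%N -> binsum p 17 = 1,
         (p %% 17 \in [:: 2; 15; 8; 9])%N -> binsum p 17 = -1,
         (p %% 17 \in [:: 3; 14; 5; 12])%N -> binsum p 17 = 4
       & (p %% 17 \in [:: 6; 11; 7; 10])%N -> binsum p 17 = -4]).
Proof.
split; first exact: binsum20_values.
split; first exact: binsum52_values.
exact: binsum17_values.
Qed.
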